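(* Let $h$ be a positive integer and $L$ an $h$-modular lattice with zero. Let $x$ be a map from $\mathrm{J}(K)$ to $L$ with finite range. Then $x\in\mathcal{A}^*$ if and only if $x$ extends to a homomorphism from $\langle K^-,\vee\rangle$ to $\langle L,\wedge\rangle$, where $K^-=K\setminus\{0_K\}$. Furthermore, such an extension is unique.
   Context: $K$ is the lattice consisting of $\varnothing$ (its zero $0_K$), $C=\{c\}$, $A_m=\{a_k:k\geq m\}$, $B_n=\{b_k:k\geq n\}$ ($m,n<\omega$), and $C\cup A_m\cup B_n$ with $|m-n|\leq1$, ordered by inclusion; $a_n,b_n,c$ denote $A_n,B_n,C$, so $\mathrm{J}(K)=\{c\}\cup\{a_n\}\cup\{b_n\}$. $\mathcal{A}$ is the set of antitone maps $x\colon\mathrm{J}(K)\to L$ ($p\leq q\Rightarrow x(p)\geq x(q)$) with finite range. For $x\in\mathcal{A}$, $x(a_\infty)$, $x(b_\infty)$ are the eventual values of the increasing sequences $(x(a_n))$, $(x(b_n))$. The map $x^{(1)}$ is defined by $x^{(1)}(c)=x(c)\vee(x(a_\infty)\wedge x(b_\infty))$, $x^{(1)}(a_0)=x(a_0)$, $x^{(1)}(b_0)=x(b_0)$, $x^{(1)}(a_{n+1})=x(a_{n+1})\vee(x(b_n)\wedge x(c))$, $x^{(1)}(b_{n+1})=x(b_{n+1})\vee(x(a_n)\wedge x(c))$ for $n<\omega$. $\mathcal{A}^*=\{x\in\mathcal{A}:x^{(1)}=x\}$. $L$ is $h$-modular if $u^{(h+1)}=u^{(h)}$ for all $u\in L^3$,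 where $\langle x,y,z\rangle^{(1)}=\langle x\vee(y\wedge z),y\vee(x\wedge z),z\vee(x\wedge y)\rangle$ and $u^{(k+1)}=(u^{(k)})^{(1)}$. *)

From HB Require Import structures.
From mathcomp Require Import all_boot all_order.
Set Implicit Arguments. Unset Strict Implicit. Unset Printing Implicit Defensive.
Import Order.LTheory.
Local Open Scope order_scope.

(* Points of the lattice K: c, a_k, b_k.  These also index J(K):
   jc ~ C = {c}, ja n ~ A_n = {a_k : k >= n}, jb n ~ B_n = {b_k : k >= n}. *)
Inductive JK := jc | ja of nat | jb of nat.

(* Elements of K (as codes): empty, C, A_m, B_n, C u A_m u B_n. *)
Inductive Kel := K0 | KC | KA of nat | KB of nat | KCAB of nat & nat.

Definition validK (k : Kel) : bool :=
  match k with KCAB m n => (m <= n.+1)%N && (n <= m.+1)%N | _ => true end.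

Definition memK (k : Kel) (p : JK) : bool :=
  match k, p with
  | K0, _ => false
  | KC, jc => true
  | KA m, ja j => (m <= j)%N
  | KB n, jb j => (n <= j)%N
  | KCAB _ _, jc => true
  | KCAB m _, ja j => (m <= j)%N
  | KCAB _ n, jb j => (n <= j)%N
  | _, _ => false
  end.

Definition leK (k1 k2 : Kel) : Prop := forall p, memK k1 p -> memK k2 p.

Definition is_joinK (k1 k2 k3 : Kel) : Prop :=
  [/\ validK k3, leK k1 k3, leK k2 k3 &
      forall k, validK k -> leK k1 k -> leK k2 k -> leK k3 k].

Definition embJ (p : JK) : Kel :=
  match p with jc => KC | ja n => KA n | jb n => KB n end.

Definition leJ (p q : JK) : Prop := leK (embJ p) (embJ q).

Section Lat.
Context {disp : Order.disp_t} {L : bLatticeType disp}.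

Definition tri1 (u : L * L * L) : L * L * L :=
  let: (x, y, z) := u in
  (x `|` (y `&` z), y `|` (x `&` z), z `|` (x `&` y)).

Definition hmodular (h : nat) : Prop :=
  forall u : L * L * L, iter h.+1 tri1 u = iter h tri1 u.

Definition antitoneJ (x : JK -> L) : Prop :=
  forall p q, leJ p q -> x q <= x p.

Definition finite_range (x : JK -> L) : Prop :=
  exists s : seq L, forall p, x p \in s.

Definition eventual_value (u : nat -> L) (v : L) : Prop :=
  exists N, forall n, (N <= n)%N -> u n = v.

(* x^(1), given the eventual values ainf = x(a_oo), binf = x(b_oo). *)
Definition x1 (x : JK -> L) (ainf binf : L) (p : JK) : L :=
  match p with
  | jc => x jc `|` (ainf `&` binf)
  | ja 0 => x (ja 0)
  | jb 0 => x (jb 0)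
  | ja n.+1 => x (ja n.+1) `|` (x (jb n) `&` x jc)
  | jb n.+1 => x (jb n.+1) `|` (x (ja n) `&` x jc)
  end.

Definition inA (x : JK -> L) : Prop := antitoneJ x /\ finite_range x.

Definition inAstar (x : JK -> L) : Prop :=
  inA x /\
  exists ainf binf, eventual_value (fun n => x (ja n)) ainf /\
                    eventual_value (fun n => x (jb n)) binf /\
                    forall p, x1 x ainf binf p = x p.

Definition join_meet_hom (f : Kel -> L) : Prop :=
  forall k1 k2 k3, validK k1 -> validK k2 -> k1 <> K0 -> k2 <> K0 ->
    is_joinK k1 k2 k3 -> f k3 = f k1 `&` f k2.

Definition extending_hom (x : JK -> L) (f : Kel -> L) : Prop :=
  join_meet_hom f /\ forall p, f (embJ p) = x p.

End Lat.

From mathcomp Require Import all_boot all_order.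
From mathcomp Require Import zify.
From Stdlib Require Import Classical.

Import Order.LTheory.
Local Open Scope order_scope.

(* The extension of an antitone x must send C u A_m u B_n, the join of A_m
   and B_n, to x(c) /\ x(a_m) /\ x(b_n); this gives uniqueness.  That map is a
   homomorphism <K^-, \/> -> <L, /\> exactly when, for every M in L, the points
   p with M <= x(p) form the point set of an element of K: such sets are the
   down-sets of J(K) closed under the rules (b_n, c => a_(n+1)),
   (a_n, c => b_(n+1)) and (a_m, b_n => c), which is what x^(1) = x expresses.
   Finiteness of the range makes (x(a_n)) and (x(b_n)) eventually constant. *)

Lemma sub_count_ltn (T : eqType) (a1 a2 : pred T) (s : seq T) (y : T) :
  subpred a1 a2 -> y \in s -> a2 y -> ~~ a1 y -> (count a1 s < count a2 s)%N.
Proof.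
move=> a12; elim: s => [//|z s IHs]; rewrite inE => /orP[/eqP<- | ys] a2y a1Ny /=.
  by rewrite a2y (negbTE a1Ny) add0n add1n ltnS sub_count.
have : (nat_of_bool (a1 z) <= a2 z)%N by case a1z: (a1 z); rewrite // a12.
by have := IHs ys a2y a1Ny; lia.
Qed.

Lemma homo_bounded_nat_eventually_constant {c : nat -> nat} {B : nat} :
  {homo c : m n / (m <= n)%N} -> (forall n, c n <= B)%N ->
  exists N, forall n, (N <= n)%N -> c n = c N.
Proof.
move=> c_homo c_le.
suff: forall d k, (B - c k <= d)%N -> exists N, forall n, (N <= n)%N -> c n = c N.
  by move/(_ (B - c 0)%N 0); apply.
elim=> [|d IHd] k Bk.
  by exists k => n kn; have := c_homo _ _ kn; have := c_le n; lia.
have [[n [kn cnk]] | cst] := classic (exists n, (k <= n)%N /\ c n <> c k).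
  by apply: (IHd n); have := c_homo _ _ kn; have := c_le n; lia.
by exists k => n kn; apply: NNPP => cnk; apply: cst; exists n.
Qed.

(* Counting the elements of the range below u k turns u into a bounded
   nondecreasing sequence of naturals that still separates distinct values. *)
Lemma homo_finite_range_eventually_constant {d} {T : porderType d}
    {u : nat -> T} {s : seq T} :
  {homo u : m n / (m <= n)%N >-> m <= n} -> (forall n, u n \in s) ->
  exists N, forall n, (N <= n)%N -> u n = u N.
Proof.
move=> u_homo u_s; pose c k := count (<= u k) s.
have c_homo : {homo c : m n / (m <= n)%N}.
  by move=> m n mn; apply: sub_count => y /= /le_trans; apply; exact: u_homo.
have [N cN] := homo_bounded_nat_eventually_constant c_homo (fun n => count_size _ s).
exists N => n Nn; apply/le_anti; rewrite [u N <= _]u_homo // andbT.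
apply: contraT => unN.
have : (c N < c n)%N.
  apply: (@sub_count_ltn _ _ _ _ (u n)) => //= y /le_trans; apply; exact: u_homo.
by rewrite cN // ltnn.
Qed.

Lemma memK_embJ p : memK (embJ p) p.
Proof. by case: p => //= n; rewrite leqnn. Qed.

Lemma embJ_valid p : validK (embJ p).
Proof. by case: p. Qed.

Lemma embJ_neq0 p : embJ p <> K0.
Proof. by case: p. Qed.

Lemma leJ_ja m n : (m <= n)%N -> leJ (ja n) (ja m).
Proof. by move=> mn; case=> [|j|j] //= /(leq_trans mn). Qed.

Lemma leJ_jb m n : (m <= n)%N -> leJ (jb n) (jb m).
Proof. by move=> mn; case=> [|j|j] //= /(leq_trans mn). Qed.

Lemma leK_neq0 {k1 k2} : leK k1 k2 -> k1 <> K0 -> k2 <> K0.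
Proof.
move=> + + k2E; rewrite k2E.
case: k1 => [//||m|n|m n] k10 _; [move: (k10 jc) | move: (k10 (ja m))
  | move: (k10 (jb n)) | move: (k10 jc)]; by rewrite /= ?leqnn => /(_ isT).
Qed.

Definition Kclosed (S : pred JK) : Prop :=
  [/\ forall p q, leJ p q -> S q -> S p,
      forall n, S (jb n) -> S jc -> S (ja n.+1),
      forall n, S (ja n) -> S jc -> S (jb n.+1) &
      forall m n, S (ja m) -> S (jb n) -> S jc].

Lemma memK_Kclosed k : validK k -> Kclosed (memK k).
Proof.
move=> vk; split=> [p q /(_ p (memK_embJ p)) |||].
- by case: k vk => [||m|n|m n]; case: p => [|i|i]; case: q => [|j|j] //=; lia.
- by case: k vk => //= m n /andP[] *; lia.
- by case: k vk => //= m n /andP[] *; lia.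
- by case: k vk.
Qed.

(* An element of K is generated by three data: whether it contains c and the
   least indices of its a-points and of its b-points ([None] if there are
   none).  [Kclose g] is the least element of K containing these generators. *)
Definition Kgen_t : Type := bool * option nat * option nat.

Definition memO (o : option nat) (j : nat) : bool :=
  if o is Some m then (m <= j)%N else false.

Definition omin (o1 o2 : option nat) : option nat :=
  match o1, o2 with
  | Some m, Some n => Some (minn m n)
  | Some m, None => Some m
  | None, o => o
  end.

Definition Kgen (k : Kel) : Kgen_t :=
  match k with
  | K0 => (false, None, None)
  | KC => (true, None, None)
  | KA m => (false, Some m, None)
  | KB n => (false, None, Some n)
  | KCAB m n => (true, Some m, Some n)
  end.

Definition memG (g : Kgen_t) (p : JK) : bool :=
  let: (c, ma, nb) := g in
  match p with jc => c | ja j => memO ma j | jb j => memO nb j end.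

Definition Gunion (g1 g2 : Kgen_t) : Kgen_t :=
  let: (c1, ma1, nb1) := g1 in let: (c2, ma2, nb2) := g2 in
  (c1 || c2, omin ma1 ma2, omin nb1 nb2).

Definition Kclose (g : Kgen_t) : Kel :=
  match g with
  | (c, None, None) => if c then KC else K0
  | (c, Some m, None) => if c then KCAB m m.+1 else KA m
  | (c, None, Some n) => if c then KCAB n.+1 n else KB n
  | (_, Some m, Some n) => KCAB (minn m n.+1) (minn n m.+1)
  end.

Definition Kjoin (k1 k2 : Kel) : Kel := Kclose (Gunion (Kgen k1) (Kgen k2)).

Lemma memG_Kgen k : memG (Kgen k) =1 memK k.
Proof. by case: k => *; case. Qed.

Lemma memO_min o1 o2 j : memO (omin o1 o2) j = memO o1 j || memO o2 j.
Proof. by case: o1 o2 => [m|] [n|] //=; rewrite ?geq_min ?orbF. Qed.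

Lemma memG_union g1 g2 p : memG (Gunion g1 g2) p = memG g1 p || memG g2 p.
Proof.
by case: g1 g2 => [[c1 ma1] nb1] [[c2 ma2] nb2]; case: p => [|j|j] /=;
  rewrite ?memO_min.
Qed.

Lemma Kclose_valid g : validK (Kclose g).
Proof. by case: g => [[[] [m|]] [n|]] /=; lia. Qed.

Lemma memK_Kclose g p : memG g p -> memK (Kclose g) p.
Proof. by case: g => [[[] [m|]] [n|]]; case: p => [|j|j] /=; lia. Qed.

Lemma Kclose_min {S : pred JK} {g} :
  Kclosed S -> (forall p, memG g p -> S p) -> forall p, memK (Kclose g) p -> S p.
Proof.
move=> [down ruleA ruleB ruleC].
have Sa m j : (m <= j)%N -> S (ja m) -> S (ja j) by move/leJ_ja/down.
have Sb m j : (m <= j)%N -> S (jb m) -> S (jb j) by move/leJ_jb/down.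
case: g => [[c [m|]] [n|]] Sg.
- have Sam := Sg (ja m) (leqnn m); have Sbn := Sg (jb n) (leqnn n).
  have Sc := ruleC _ _ Sam Sbn.
  case=> [_|j|j] //=; rewrite geq_min => /orP[] lej.
  + exact: Sa lej Sam.
  + exact: Sa lej (ruleA _ Sbn Sc).
  + exact: Sb lej Sbn.
  + exact: Sb lej (ruleB _ Sam Sc).
- have Sam := Sg (ja m) (leqnn m).
  case: c Sg => Sg [|j|j] //= lej.
  + exact: Sg jc isT.
  + exact: Sa lej Sam.
  + exact: Sb lej (ruleB _ Sam (Sg jc isT)).
  + exact: Sa lej Sam.
- have Sbn := Sg (jb n) (leqnn n).
  case: c Sg => Sg [|j|j] //= lej.
  + exact: Sg jc isT.
  + exact: Sa lej (ruleA _ Sbn (Sg jc isT)).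
  + exact: Sb lej Sbn.
  + exact: Sb lej Sbn.
- by case: c Sg => Sg [|j|j] //= _; exact: Sg jc isT.
Qed.

Lemma Kjoin_valid k1 k2 : validK (Kjoin k1 k2).
Proof. exact: Kclose_valid. Qed.

Lemma memK_Kjoin k1 k2 p : memK k1 p || memK k2 p -> memK (Kjoin k1 k2) p.
Proof. by move=> k12p; apply: memK_Kclose; rewrite memG_union !memG_Kgen. Qed.

Lemma Kjoin_min {S : pred JK} {k1 k2} : Kclosed S ->
  (forall p, memK k1 p -> S p) -> (forall p, memK k2 p -> S p) ->
  forall p, memK (Kjoin k1 k2) p -> S p.
Proof.
move=> SK Sk1 Sk2; apply: Kclose_min => // p.
by rewrite memG_union !memG_Kgen => /orP[/Sk1 | /Sk2].
Qed.

Lemma Kjoin_is_join k1 k2 : is_joinK k1 k2 (Kjoin k1 k2).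
Proof.
split=> [||| k vk k1k k2k]; first exact: Kjoin_valid.
- by move=> p k1p; apply: memK_Kjoin; rewrite k1p.
- by move=> p k2p; apply: memK_Kjoin; rewrite k2p orbT.
- by apply: Kjoin_min k1k k2k; apply: memK_Kclosed.
Qed.

Lemma Kjoin_AB {m n} : validK (KCAB m n) -> Kjoin (KA m) (KB n) = KCAB m n.
Proof. by move=> /andP[mn nm]; rewrite /Kjoin /= (minn_idPl mn) (minn_idPl nm). Qed.

Section Extension.
Context {disp : Order.disp_t} {L : bLatticeType disp}.
Implicit Types (x : JK -> L) (f : Kel -> L) (M : L).

Lemma antitoneJ_ja {x} : antitoneJ x ->
  {homo (fun n => x (ja n)) : m n / (m <= n)%N >-> m <= n}.
Proof. by move=> anti m n /leJ_ja; apply: anti. Qed.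

Lemma antitoneJ_jb {x} : antitoneJ x ->
  {homo (fun n => x (jb n)) : m n / (m <= n)%N >-> m <= n}.
Proof. by move=> anti m n /leJ_jb; apply: anti. Qed.

Lemma le_eventual_value {u : nat -> L} {v n} :
  {homo u : m n / (m <= n)%N >-> m <= n} -> eventual_value u v -> u n <= v.
Proof.
move=> u_homo [N uN]; rewrite -(uN (maxn n N)) ?leq_maxr //.
by apply: u_homo; rewrite leq_maxl.
Qed.

Definition ext_of x (k : Kel) : L :=
  match k with
  | K0 => \bot
  | KC => x jc
  | KA m => x (ja m)
  | KB n => x (jb n)
  | KCAB m n => x jc `&` (x (ja m) `&` x (jb n))
  end.

Lemma ext_of_embJ x p : ext_of x (embJ p) = x p.
Proof. by case: p. Qed.

Lemma ext_of_le {x k p} : antitoneJ x -> memK k p -> ext_of x k <= x p.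
Proof.
move=> anti; have [xa xb] := (antitoneJ_ja anti, antitoneJ_jb anti).
case: k p => [||m|n|m n] [|j|j] //= kp.
- exact: xa.
- exact: xb.
- exact: leIl.
- by apply/leIxr/leIxl; apply: xa.
- by apply/leIxr/leIxr; apply: xb.
Qed.

Lemma le_ext_of {x k} M : antitoneJ x -> k <> K0 ->
  (M <= ext_of x k) <-> (forall p, memK k p -> M <= x p).
Proof.
move=> anti k0; split=> [Mk p kp | Mx]; first exact: le_trans Mk (ext_of_le anti kp).
case: k k0 Mx => [//||m|n|m n] _ Mx /=.
- exact: Mx jc isT.
- exact: Mx (ja m) (leqnn m).
- exact: Mx (jb n) (leqnn n).
- by rewrite !lexI Mx // Mx /= ?leqnn // Mx /= ?leqnn.
Qed.

Lemma inAstar_Kclosed {x} M : inAstar x -> Kclosed (fun p => M <= x p).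
Proof.
move=> [[anti _] [ai [bi [ea [eb x1x]]]]].
split=> [p q pq Mq | n Mb Mc | n Ma Mc | m n Ma Mb].
- exact: le_trans Mq (anti _ _ pq).
- by rewrite -(x1x (ja n.+1)) /=; apply: le_trans (leUr _ _); rewrite lexI Mb Mc.
- by rewrite -(x1x (jb n.+1)) /=; apply: le_trans (leUr _ _); rewrite lexI Ma Mc.
- rewrite -(x1x jc) /=; apply: le_trans (leUr _ _); rewrite lexI.
  rewrite (le_trans Ma (le_eventual_value (antitoneJ_ja anti) ea)).
  by rewrite (le_trans Mb (le_eventual_value (antitoneJ_jb anti) eb)).
Qed.

Lemma ext_of_extending_hom x : inAstar x -> extending_hom x (ext_of x).
Proof.
move=> xA; have anti := xA.1.1; split; last exact: ext_of_embJ.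
move=> k1 k2 k3 _ _ k1N k2N [_ k13 k23 k3_min].
have k3N := leK_neq0 k13 k1N.
apply/le_anti; rewrite lexI -andbA; apply/and3P; split.
- by apply/le_ext_of => // p /k13; apply: ext_of_le.
- by apply/le_ext_of => // p /k23; apply: ext_of_le.
set M := ext_of x k1 `&` ext_of x k2.
have Mk1 p : memK k1 p -> M <= x p by move=> k1p; apply: leIxl; apply: ext_of_le.
have Mk2 p : memK k2 p -> M <= x p by move=> k2p; apply: leIxr; apply: ext_of_le.
have k3_Kjoin : leK k3 (Kjoin k1 k2).
  by apply: k3_min; [exact: Kjoin_valid | move=> p k1p | move=> p k2p];
    apply: memK_Kjoin; rewrite ?k1p ?k2p ?orbT.
apply/le_ext_of => // p /k3_Kjoin.
exact: Kjoin_min (inAstar_Kclosed M xA) Mk1 Mk2 p.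
Qed.

Lemma join_meet_hom_antitone {f k1 k2} : join_meet_hom f ->
  validK k1 -> validK k2 -> k1 <> K0 -> leK k1 k2 -> f k2 <= f k1.
Proof.
move=> hom vk1 vk2 k1N k12; rewrite (hom k1 k2 k2) ?leIl //.
- exact: leK_neq0 k12 k1N.
- by split.
Qed.

Lemma extending_hom_antitone {x f} : extending_hom x f -> antitoneJ x.
Proof.
move=> [hom ext] p q pq; rewrite -!ext.
exact: join_meet_hom_antitone hom (embJ_valid p) (embJ_valid q) (embJ_neq0 p) pq.
Qed.

Lemma extending_hom_le {x f k p} : extending_hom x f ->
  validK k -> leK (embJ p) k -> f k <= x p.
Proof.
move=> [hom ext] vk pk; rewrite -ext.
exact: join_meet_hom_antitone hom (embJ_valid p) vk (embJ_neq0 p) pk.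
Qed.

Lemma extending_hom_Kjoin {x f} p q : extending_hom x f ->
  f (Kjoin (embJ p) (embJ q)) = x p `&` x q.
Proof.
move=> [hom ext]; rewrite -!ext.
exact: hom (embJ_valid p) (embJ_valid q) (embJ_neq0 p) (embJ_neq0 q) (Kjoin_is_join _ _).
Qed.

Lemma extending_hom_x1 {x f ai bi} : extending_hom x f ->
  eventual_value (fun n => x (ja n)) ai -> eventual_value (fun n => x (jb n)) bi ->
  forall p, x1 x ai bi p = x p.
Proof.
move=> xf [Na ea] [Nb eb]; case=> [|[|n]|[|n]] //=; apply: join_l.
- pose N := maxn Na Nb; rewrite -(ea N) ?leq_maxl // -(eb N) ?leq_maxr //.
  rewrite -(extending_hom_Kjoin (ja N) (jb N) xf).
  by apply: extending_hom_le xf (Kjoin_valid _ _) _; case.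
- rewrite -(extending_hom_Kjoin (jb n) jc xf).
  by apply: extending_hom_le xf (Kjoin_valid _ _) _; case.
- rewrite -(extending_hom_Kjoin (ja n) jc xf).
  by apply: extending_hom_le xf (Kjoin_valid _ _) _; case.
Qed.

Lemma extending_hom_inAstar {x f} : finite_range x -> extending_hom x f -> inAstar x.
Proof.
move=> [s xs] xf; have anti := extending_hom_antitone xf.
have [Na ea] := homo_finite_range_eventually_constant (antitoneJ_ja anti)
  (fun n => xs (ja n)).
have [Nb eb] := homo_finite_range_eventually_constant (antitoneJ_jb anti)
  (fun n => xs (jb n)).
have evA : eventual_value (fun n => x (ja n)) (x (ja Na)) by exists Na.
have evB : eventual_value (fun n => x (jb n)) (x (jb Nb)) by exists Nb.
split; first by split; last exists s.
by exists (x (ja Na)), (x (jb Nb)); do 2!split=> //; exact: extending_hom_x1 xf evA evB.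
Qed.

Lemma extending_hom_unique {x f g} : extending_hom x f -> extending_hom x g ->
  forall k, validK k -> k <> K0 -> f k = g k.
Proof.
move=> xf xg [//||m|n|m n] vk _.
- by rewrite (xf.2 jc) (xg.2 jc).
- by rewrite (xf.2 (ja m)) (xg.2 (ja m)).
- by rewrite (xf.2 (jb n)) (xg.2 (jb n)).
- by rewrite -(Kjoin_AB vk) (extending_hom_Kjoin (ja m) (jb n) xf)
    (extending_hom_Kjoin (ja m) (jb n) xg).
Qed.

End Extension.

Theorem lemma5p7 (h : nat) (disp : Order.disp_t) (L : bLatticeType disp)
    (x : JK -> L) :
  (0 < h)%N -> @hmodular disp L h -> finite_range x ->
  (inAstar x <-> exists f : Kel -> L, extending_hom x f) /\
  (forall f g : Kel -> L, extending_hom x f -> extending_hom x g ->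
     forall k, validK k -> k <> K0 -> f k = g k).
Proof.
move=> _ _ x_fin; split; last exact: @extending_hom_unique.
split=> [xA | [f xf]]; first by exists (ext_of x); exact: ext_of_extending_hom.
exact: extending_hom_inAstar x_fin xf.
Qed.
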